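(* Let $k$ be a finite field and $n\geq 2$. Then the kernel of the natural homomorphism $\mathrm{BCr}_n(k)\to\mathrm{Sym}(\mathbb{P}^n(k))$ is not a normal subgroup of $\mathrm{Cr}_n(k)$.
   Context: $\mathrm{Cr}_n(k)$ is the group of birational self-maps of $\mathbb{P}^n$ defined over $k$, and $\mathrm{BCr}_n(k)$ is the subgroup of those $f$ such that both $f$ and $f^{-1}$ are defined at every point of $\mathbb{P}^n(k)$; the natural homomorphism sends such $f$ to the permutation it induces on $\mathbb{P}^n(k)$. *)

From HB Require Import structures.
From mathcomp Require Import all_boot all_algebra.
From mathcomp Require Import mpoly.
Set Implicit Arguments. Unset Strict Implicit. Unset Printing Implicit Defensive.
Import GRing.Theory.
Local Open Scope ring_scope.

(* Rational self-maps of P^(m-1) over a field k are represented by m-tuples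
   of homogeneous polynomials of a common degree in m variables x_0..x_{m-1}
   (homogeneous coordinates).  Here m = n+1 for P^n. *)

Definition ratmap (k : fieldType) (m : nat) := m.-tuple {mpoly k[m]}.

Definition homog_map (k : fieldType) (m : nat) (F : ratmap k m) : Prop :=
  exists d : nat, forall i : 'I_m, tnth F i \is d.-homog.

Definition nonzero_map (k : fieldType) (m : nat) (F : ratmap k m) : Prop :=
  exists i : 'I_m, tnth F i != 0.

Definition equiv_map (k : fieldType) (m : nat) (F G : ratmap k m) : Prop :=
  [/\ nonzero_map F, nonzero_map G &
      forall i j : 'I_m, tnth F i * tnth G j = tnth F j * tnth G i].

Definition comp_map (k : fieldType) (m : nat) (F G : ratmap k m) : ratmap k m :=
  [tuple (tnth F i \mPo G) | i < m].

Definition id_map (k : fieldType) (m : nat) : ratmap k m :=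
  [tuple 'X_i | i < m].

Definition is_inverse (k : fieldType) (m : nat) (F G : ratmap k m) : Prop :=
  [/\ homog_map G, equiv_map (comp_map G F) (id_map k m)
    & equiv_map (comp_map F G) (id_map k m)].

Definition birational (k : fieldType) (m : nat) (F : ratmap k m) : Prop :=
  homog_map F /\ exists G, is_inverse F G.

(* k-points of P^(m-1): nonzero coordinate vectors (up to scalars) *)
Definition kpoint (k : fieldType) (m : nat) (v : 'I_m -> k) : Prop :=
  exists i : 'I_m, v i != 0.

Definition eval_map (k : fieldType) (m : nat) (F : ratmap k m) (v : 'I_m -> k)
  : 'I_m -> k := fun i => (tnth F i).@[v].

Definition defined_at (k : fieldType) (m : nat) (F : ratmap k m)
  (v : 'I_m -> k) : Prop :=
  exists G : ratmap k m, [/\ homog_map G, equiv_map F G & kpoint (eval_map G v)].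

Definition fixes_point (k : fieldType) (m : nat) (F : ratmap k m)
  (v : 'I_m -> k) : Prop :=
  forall G : ratmap k m, homog_map G -> equiv_map F G -> kpoint (eval_map G v) ->
    forall i j : 'I_m, eval_map G v i * v j = eval_map G v j * v i.

Definition in_BCr (k : fieldType) (m : nat) (F : ratmap k m) : Prop :=
  [/\ birational F,
      (forall v, kpoint v -> defined_at F v) &
      exists Fi, is_inverse F Fi /\ (forall v, kpoint v -> defined_at Fi v)].

Definition in_BCr_kernel (k : fieldType) (m : nat) (F : ratmap k m) : Prop :=
  in_BCr F /\ (forall v, kpoint v -> fixes_point F v).

(* Choose [c] with [u ^+ 2 - u != c] for all [u] in [k], so that
   [x0 ^+ 2 + x0 x1 - c x1 ^+ 2] is the norm form of [k(w)], [w ^+ 2 = w + c],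
   and has no nontrivial zero.  For forms [a], [b] of equal degree, the map
   [x0 + x1 w |-> (a + b w) ^+ 2 (x0 + x1 w)], [x_i |-> N(a + b w) x_i]
   ([i >= 2]) is birational, with inverse the same map for the conjugate of
   [a + b w], as soon as [a] and [b] are rescaled by a common factor under
   the map.  Taking for [a] a form built from the norm form and from
   [u ^+ Q - u v ^+ Q.-1 + v ^+ Q] (which vanishes on [k ^ 2] only at [0]),
   and for [b] a form vanishing on all of [P^n(k)], gives a map [f] acting
   trivially on [P^n(k)].  Conjugating by a quadratic Cremona map [g], the
   components of [g f g^-1] share the factor [x0]; once it is removed, the
   k-point [(0:1:1:0:...:0)] is sent to a point whose coordinates 1 and 2
   differ. *)

From mathcomp Require Import all_boot all_algebra.
From mathcomp Require Import mpoly.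
From mathcomp Require Import all_field fingroup cyclic ring zify.
Set Implicit Arguments. Unset Strict Implicit. Unset Printing Implicit Defensive.
Import GRing.Theory.
Local Open Scope ring_scope.

Section Forms.
Variable n' : nat.
Local Notation m := n'.+3.

Definition i0 : 'I_m := Ordinal (isT : (0 < m)%N).
Definition i1 : 'I_m := Ordinal (isT : (1 < m)%N).
Definition i2 : 'I_m := Ordinal (isT : (2 < m)%N).

Variable R : comNzRingType.
Implicit Types (c a b s t : R) (x : 'I_m -> R).

Definition qnorm c a b := a ^+ 2 + a * b - c * b ^+ 2.

Definition qform c x := qnorm c (x i0) (x i1).

(* With [w ^+ 2 = w + c], [twist c a b x] multiplies [x i0 + x i1 w] by
   [(a + b w) ^+ 2] and the other coordinates by the norm [qnorm c a b] of
   [a + b w], whose conjugate is [(a + b) - b w]. *)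
Definition twist c a b x (i : 'I_m) : R :=
  match val i with
  | 0 => (a ^+ 2 + c * b ^+ 2) * x i0 + c * (a * b *+ 2 + b ^+ 2) * x i1
  | 1 => (a * b *+ 2 + b ^+ 2) * x i0 + (a ^+ 2 + c * b ^+ 2 + (a * b *+ 2 + b ^+ 2)) * x i1
  | _ => qnorm c a b * x i
  end.

Definition cremona x (i : 'I_m) : R :=
  match val i with
  | 0 => x i1 * (x i2 - x i0)
  | 1 => x i0 * (x i2 - x i0)
  | 2 => x i0 * x i1
  | _ => x i * (x i2 - x i0)
  end.

Definition cremona_inv x (i : 'I_m) : R :=
  match val i with
  | 0 => x i1 * x i2
  | 1 => x i0 * x i2
  | 2 => x i1 * x i2 + x i0 * x i1
  | _ => x i * x i2
  end.

Variable Q : nat.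

Definition frob_form a b := a ^+ Q - a * b ^+ Q.-1 + b ^+ Q.

Fixpoint frob_chain s x j :=
  if j is j'.+1 then frob_form (frob_chain s x j') (x (inord j'.+2) ^+ (2 * Q ^ j'))
  else s.

Definition aform s x := frob_chain s x n'.+1 ^+ 2.

Definition bform J s x := s * x i2 ^+ J * (s ^+ Q.-1 - (x i2 ^+ 2) ^+ Q.-1).

Definition cremona_defect c x :=
  x i1 * x i2 ^+ 2 - c * x i0 * x i2 ^+ 2 - x i1 ^+ 2 * x i2 *+ 2 - x i0 * x i1 ^+ 2.

(* With [y := twist c a (x i0 * b) (cremona_inv x)], [conj_red1] is
   [y i1 / x i0] and [conj_red2] is [(y i2 - y i0) / x i0]. *)
Definition conj_red1 c a b x :=
  (a * b *+ 2 + x i0 * b ^+ 2) * (x i1 * x i2)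
  + (a ^+ 2 + c * x i0 ^+ 2 * b ^+ 2 + a * x i0 * b *+ 2 + x i0 ^+ 2 * b ^+ 2) * x i2.

Definition conj_red2 c a b x :=
  (a * b - c * x i0 * b ^+ 2 *+ 2) * (x i1 * x i2)
  + qnorm c a (x i0 * b) * x i1 - c * x i0 * b * (a *+ 2 + x i0 * b) * x i2.

Definition conj_red c a b x (i : 'I_m) : R :=
  let y := twist c a (x i0 * b) (cremona_inv x) in
  match val i with
  | 0 => x i0 * conj_red1 c a b x * conj_red2 c a b x
  | 1 => y i0 * conj_red2 c a b x
  | 2 => y i0 * conj_red1 c a b x
  | _ => y i * conj_red2 c a b x
  end.

End Forms.

Arguments i0 {n'}.
Arguments i1 {n'}.
Arguments i2 {n'}.

Ltac case_ord3 i :=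
  let j := fresh "j" in let lt_j := fresh "lt_j" in
  case: i => [[|[|[|j]]] lt_j];
  [ have -> : Ordinal lt_j = i0 by apply: val_inj
  | have -> : Ordinal lt_j = i1 by apply: val_inj
  | have -> : Ordinal lt_j = i2 by apply: val_inj
  | idtac ].

Section FormIdentities.
Variables (n' : nat) (R : comNzRingType).
Local Notation m := n'.+3.
Implicit Types (c a b s t : R) (x y : 'I_m -> R).

Lemma qform_twist c a b x : qform c (twist c a b x) = qnorm c a b ^+ 2 * qform c x.
Proof. rewrite /qform /twist /qnorm /=; ring. Qed.

Lemma qnorm_conj c a b : qnorm c (a + b) (- b) = qnorm c a b.
Proof. rewrite /qnorm; ring. Qed.

Lemma twist_conj_twist c a b t x i :
  twist c (t * (a + b)) (- (t * b)) (twist c a b x) i = (t * qnorm c a b) ^+ 2 * x i.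
Proof. case_ord3 i; rewrite /twist /qnorm /=; ring. Qed.

Lemma twist_twist_conj c a b t x i :
  twist c (t * a) (t * b) (twist c (a + b) (- b) x) i = (t * qnorm c a b) ^+ 2 * x i.
Proof. case_ord3 i; rewrite /twist /qnorm /=; ring. Qed.

Lemma twist_b0 c a x i : twist c a 0 x i = a ^+ 2 * x i.
Proof. case_ord3 i; rewrite /twist /qnorm /=; ring. Qed.

Lemma twist_ge2 c a b x (i : 'I_m) : (2 <= i)%N -> twist c a b x i = qnorm c a b * x i.
Proof. by case: i => [[|[|j]] lt_j]. Qed.

Lemma cremona_invK x i : cremona_inv (cremona x) i = x i0 * x i1 * (x i2 - x i0) * x i.
Proof. case_ord3 i; rewrite /cremona_inv /cremona /=; ring. Qed.

Lemma cremonaK x i : cremona (cremona_inv x) i = x i0 * x i1 * x i2 * x i.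
Proof. case_ord3 i; rewrite /cremona_inv /cremona /=; ring. Qed.

Lemma qform_cremona_inv c x :
  qform c (cremona_inv x) - cremona_inv x i2 ^+ 2 = x i0 * cremona_defect c x.
Proof. rewrite /qform /qnorm /cremona_inv /cremona_defect /=; ring. Qed.

Lemma cremona_twist_cremona_inv c a b x i :
  cremona (twist c a (x i0 * b) (cremona_inv x)) i = x i0 * conj_red c a b x i.
Proof.
case_ord3 i; rewrite /cremona /conj_red /twist /conj_red1 /conj_red2 /cremona_inv /qnorm /=; ring.
Qed.

Lemma conj_red_at_e12 c a x : x i0 = 0 -> x i1 = 1 -> x i2 = 1 ->
  conj_red c a 1 x i1 - conj_red c a 1 x i2 = - a ^+ 3.
Proof.
move=> x0 x1 x2.
rewrite /conj_red /conj_red1 /conj_red2 /twist /cremona_inv /qnorm /= x0 x1 x2; ring.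
Qed.

Lemma frob_form_scale Q t a b : (0 < Q)%N ->
  frob_form Q (t * a) (t * b) = t ^+ Q * frob_form Q a b.
Proof. by case: Q => // Q _; rewrite /frob_form /= !exprMn !exprS; ring. Qed.

Lemma frob_chain_scale Q t s x y j : (0 < Q)%N ->
  (forall l : 'I_m, (2 <= l)%N -> y l = t * x l) -> (j <= n'.+1)%N ->
  frob_chain Q (t ^+ 2 * s) y j = t ^+ (2 * Q ^ j) * frob_chain Q s x j.
Proof.
move=> Q_gt0 yE; elim: j => [|j IHj] lt_j /=; first by rewrite expn0.
rewrite IHj 1?ltnW // yE; last by rewrite inordK //; lia.
by rewrite exprMn frob_form_scale // -exprM expnS [(Q * _)%N]mulnC mulnA.
Qed.

Lemma aform_scale Q t s x y : (0 < Q)%N ->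
  (forall l : 'I_m, (2 <= l)%N -> y l = t * x l) ->
  aform Q (t ^+ 2 * s) y = t ^+ (4 * Q ^ n'.+1) * aform Q s x.
Proof.
move=> Q_gt0 yE; rewrite /aform (frob_chain_scale _ Q_gt0 yE) // exprMn -exprM.
by rewrite mulnC mulnA.
Qed.

Lemma bform_scale Q J t s x y : (0 < Q)%N -> y i2 = t * x i2 ->
  bform Q J (t ^+ 2 * s) y = t ^+ (2 * Q + J) * bform Q J s x.
Proof.
case: Q => // Q _ y2E; rewrite /bform y2E /=.
have -> : t ^+ (2 * Q.+1 + J) = t ^+ 2 * t ^+ J * (t ^+ 2) ^+ Q.
  by rewrite -exprM -!exprD; congr (_ ^+ _); lia.
rewrite !exprMn; ring.
Qed.

End FormIdentities.

Ltac rmorph_simpl := repeat first [rewrite rmorphXn | rewrite rmorphMn | rewrite rmorphD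
  | rewrite rmorphB | rewrite rmorphN | rewrite rmorphM].

Section FormMorphisms.
Context {n' : nat} {R S : comNzRingType} {phi : {rmorphism R -> S}}.
Local Notation m := n'.+3.
Context {x : 'I_m -> R} {y : 'I_m -> S}.
Hypothesis phi_xy : forall j, phi (x j) = y j.
Implicit Types (c a b s : R).

Lemma qnorm_morph c a b : phi (qnorm c a b) = qnorm (phi c) (phi a) (phi b).
Proof. by rewrite /qnorm; rmorph_simpl. Qed.

Lemma qform_morph c : phi (qform c x) = qform (phi c) y.
Proof. by rewrite /qform qnorm_morph !phi_xy. Qed.

Lemma twist_morph c a b i : phi (twist c a b x i) = twist (phi c) (phi a) (phi b) y i.
Proof.
by rewrite /twist; case: (val i) => [|[|j]]; rewrite ?qnorm_morph; rmorph_simpl; rewrite !phi_xy.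
Qed.

Lemma cremona_morph i : phi (cremona x i) = cremona y i.
Proof. by rewrite /cremona; case: (val i) => [|[|[|j]]]; rmorph_simpl; rewrite !phi_xy. Qed.

Lemma cremona_inv_morph i : phi (cremona_inv x i) = cremona_inv y i.
Proof. by rewrite /cremona_inv; case: (val i) => [|[|[|j]]]; rmorph_simpl; rewrite !phi_xy. Qed.

Lemma aform_morph Q s : phi (aform Q s x) = aform Q (phi s) y.
Proof.
rewrite /aform rmorphXn; congr (_ ^+ _).
by elim: n'.+1 => [|j IHj] //=; rewrite /frob_form; rmorph_simpl; rewrite IHj phi_xy.
Qed.

Lemma bform_morph Q J s : phi (bform Q J s x) = bform Q J (phi s) y.
Proof. by rewrite /bform; rmorph_simpl; rewrite phi_xy. Qed.

Lemma conj_red1_morph c a b : phi (conj_red1 c a b x) = conj_red1 (phi c) (phi a) (phi b) y.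
Proof. by rewrite /conj_red1; rmorph_simpl; rewrite !phi_xy. Qed.

Lemma conj_red2_morph c a b : phi (conj_red2 c a b x) = conj_red2 (phi c) (phi a) (phi b) y.
Proof. by rewrite /conj_red2; rmorph_simpl; rewrite !phi_xy. Qed.

End FormMorphisms.

Lemma conj_red_morph n' (R S : comNzRingType) (phi : {rmorphism R -> S})
    (x : 'I_n'.+3 -> R) y (phi_xy : forall j, phi (x j) = y j) c a b i :
  phi (conj_red c a b x i) = conj_red (phi c) (phi a) (phi b) y i.
Proof.
have phi_y j : phi (cremona_inv x j) = cremona_inv y j.
  exact: cremona_inv_morph.
rewrite /conj_red; case: (val i) => [|[|[|j]]];
  by rewrite !rmorphM ?(twist_morph phi_y) ?rmorphM ?phi_xy
    ?(conj_red1_morph phi_xy) ?(conj_red2_morph phi_xy).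
Qed.


Section FiniteField.
Variable k : finFieldType.
Local Notation Q := #|k|.

Lemma natr_card : (Q%:R : k) = 0.
Proof.
have := @expg_cardG _ [set: k] (1%R : k) (in_setT _).
by rewrite cardsT FinRing.zmodXgE.
Qed.

Lemma expf_card_pred (a : k) : a != 0 -> a ^+ Q.-1 = 1.
Proof.
move=> a_neq0; apply: (mulfI a_neq0); rewrite -exprS prednK ?expf_card ?mulr1 //.
exact: ltnW (finNzRing_gt1 k).
Qed.

(* On k-points, [frob_form Q a b] equals [b] if [b != 0] and [a] otherwise. *)
Lemma frob_form_eq0 (a b : k) : frob_form Q a b = 0 -> a = 0 /\ b = 0.
Proof.
rewrite /frob_form !expf_card; have [->|b_neq0] := eqVneq b 0.
  by rewrite expr0n -(subnKC (finNzRing_gt1 k)) /= mulr0 subr0 addr0.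
by rewrite expf_card_pred // mulr1 subrr add0r => b0; rewrite b0 eqxx in b_neq0.
Qed.

Lemma frob_chain_eq0 n' s (x : 'I_n'.+3 -> k) j : frob_chain Q s x j = 0 ->
  s = 0 /\ forall l : 'I_n'.+3, (2 <= l <= j.+1)%N -> x l = 0.
Proof.
elim: j => [|j IHj] /=; first by move=> s0; split=> // l; lia.
case/frob_form_eq0 => /IHj [s0 xE] /eqP; rewrite expf_eq0 => /andP [_ /eqP x_eq0].
split=> // l /andP [l_ge2]; rewrite leq_eqVlt => /orP [/eqP lE|l_lt].
  by rewrite -x_eq0 -lE inord_val.
by apply: xE; rewrite l_ge2.
Qed.

Lemma aform_eq0 n' s (x : 'I_n'.+3 -> k) : aform Q s x = 0 ->
  s = 0 /\ forall l : 'I_n'.+3, (2 <= l)%N -> x l = 0.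
Proof.
move/eqP; rewrite /aform expf_eq0 => /andP [_ /eqP /frob_chain_eq0 [s0 xE]].
by split=> // l l_ge2; apply: xE; rewrite l_ge2 -ltnS ltn_ord.
Qed.

Lemma bform_eq0 n' J s (x : 'I_n'.+3 -> k) : (0 < J)%N -> bform Q J s x = 0.
Proof.
move=> J_gt0; rewrite /bform; have [->|x2_neq0] := eqVneq (x i2) 0.
  by rewrite expr0n eqn0Ngt J_gt0 mulr0 mul0r.
have [->|s_neq0] := eqVneq s 0; first by rewrite !mul0r.
by rewrite !expf_card_pred ?subrr ?mulr0 // expf_neq0.
Qed.

(* [u ^+ 2 - u] takes the value 0 twice, so it misses some value. *)
Lemma exists_anisotropic : exists c : k, forall u : k, u ^+ 2 - u != c.
Proof.
suff /existsP [c /forallP c_miss] : [exists c : k, [forall u : k, u ^+ 2 - u != c]].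
  by exists c.
apply: contraT; rewrite negb_exists => /forallP all_hit.
have /image_injP inj : #|image (fun u : k => u ^+ 2 - u) k| == #|k|.
  rewrite eqn_leq leq_image_card /=; apply/subset_leq_card/subsetP => c _.
  have /existsP [u /negPn /eqP <-] := all_hit c.
  exact: image_f.
have /inj : (0 : k) ^+ 2 - 0 = 1 ^+ 2 - 1 by rewrite expr0n expr1n !subrr.
by rewrite !inE => /(_ isT isT) /eqP; rewrite eq_sym oner_eq0.
Qed.

Lemma qform_eq0 n' (c : k) (x : 'I_n'.+3 -> k) :
  (forall u : k, u ^+ 2 - u != c) -> qform c x = 0 -> x i0 = 0 /\ x i1 = 0.
Proof.
rewrite /qform /qnorm => c_aniso qx0; have [x1_0|x1_neq0] := eqVneq (x i1) 0.
  have : x i0 ^+ 2 = 0 by rewrite -qx0 x1_0; ring.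
  by move/eqP; rewrite expf_eq0 => /andP [_ /eqP].
case/eqP: (c_aniso (- (x i0 / x i1))); apply: (mulIf (expf_neq0 2 x1_neq0)).
by move: qx0 => /eqP; rewrite subr_eq0 => /eqP qx0; rewrite mulrBl -qx0; field.
Qed.

End FiniteField.

Section RationalMaps.
Variables (k : fieldType) (m : nat).
Implicit Types (F G : ratmap k m) (v : 'I_m -> k) (p : {mpoly k[m]}).

Lemma tnth_comp_map F G i : tnth (comp_map F G) i = tnth F i \mPo G.
Proof. exact: tnth_mktuple. Qed.

Lemma comp_mpolyX_tnth G i : 'X_i \mPo G = tnth G i.
Proof. by rewrite comp_mpolyXU (tnth_nth 0). Qed.

Lemma meval_neq0 p v : p.@[v] != 0 -> p != 0.
Proof. by apply: contraNneq => ->; rewrite meval0. Qed.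

Lemma mpolyX_neq0 i : 'X_i != 0 :> {mpoly k[m]}.
Proof. by apply: (@meval_neq0 _ (fun _ => 1)); rewrite mevalXU oner_eq0. Qed.

Lemma equiv_map_scale F G p : p != 0 -> nonzero_map G ->
  (forall i, tnth F i = p * tnth G i) -> equiv_map F G.
Proof.
move=> p_neq0 [i Gi_neq0] FE; split; last by move=> i' j; rewrite !FE; ring.
  by exists i; rewrite FE mulf_neq0.
by exists i.
Qed.

Lemma equiv_map_id F p : (0 < m)%N -> p != 0 -> (forall j, tnth F j = p * 'X_j) ->
  equiv_map F (id_map k m).
Proof.
move=> m_gt0 p_neq0 FE; apply: (equiv_map_scale p_neq0).
  by exists (Ordinal m_gt0); rewrite tnth_mktuple mpolyX_neq0.
by move=> j; rewrite FE tnth_mktuple.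
Qed.

Lemma defined_at_eval F v : homog_map F -> kpoint (eval_map F v) -> defined_at F v.
Proof.
move=> homF [i Fvi_neq0]; exists F; split=> //; last by exists i.
split; [by exists i; apply: meval_neq0 Fvi_neq0 | by exists i; apply: meval_neq0 Fvi_neq0 |].
by move=> a b; rewrite mulrC.
Qed.

(* Any two representatives are proportional, so the factor [l] cancels. *)
Lemma fixes_point_scale F v (l : k) : l != 0 ->
  (forall i, eval_map F v i = l * v i) -> fixes_point F v.
Proof.
move=> l_neq0 FvE G _ [_ _ FG] _ i j; apply: (mulfI l_neq0).
have := congr1 (meval v) (FG i j); rewrite !mevalM -!/(eval_map _ v _) !FvE.
move=> FGv; transitivity (l * v j * eval_map G v i); first ring.
by rewrite -FGv; ring.
Qed.

Definition scales_kpoints F :=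
  forall v, kpoint v -> exists2 l : k, l != 0 & forall i, eval_map F v i = l * v i.

Lemma defined_at_scale F : homog_map F -> scales_kpoints F ->
  forall v, kpoint v -> defined_at F v.
Proof.
move=> homF Fv v kv; have [l l_neq0 FvE] := Fv v kv.
apply: defined_at_eval homF _; have [i vi_neq0] := kv.
by exists i; rewrite FvE mulf_neq0.
Qed.

Lemma in_BCr_kernel_scale F Fi : homog_map F -> is_inverse F Fi ->
  scales_kpoints F -> scales_kpoints Fi -> in_BCr_kernel F.
Proof.
move=> homF inv_Fi Fv Fiv; have [homFi _ _] := inv_Fi.
split; first split.
- by split=> //; exists Fi.
- exact: defined_at_scale.
- by exists Fi; split=> //; apply: defined_at_scale.
- by move=> v kv; have [l l_neq0 FvE] := Fv v kv; apply: fixes_point_scale FvE.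
Qed.

Lemma not_in_BCr_kernel F G v i j : kpoint v -> homog_map G -> equiv_map F G ->
  kpoint (eval_map G v) -> eval_map G v i * v j != eval_map G v j * v i ->
  ~ in_BCr_kernel F.
Proof. by move=> kv homG FG kGv Gv_moved [_ fixF]; case/eqP: Gv_moved; apply: fixF. Qed.

End RationalMaps.

Section Homogeneity.
Variables (k : fieldType) (m : nat).
Local Notation P := {mpoly k[m]}.
Implicit Types p q : P.

Lemma dhomog_mpolyX i : ('X_i : P) \is 1.-homog.
Proof. by rewrite dhomogX; apply/eqP; apply: mdeg1. Qed.

Lemma dhomog_mpolyC (a : k) : (a%:MP : P) \is 0.-homog.
Proof. by rewrite -[a%:MP]mulr1 mul_mpolyC; apply/dhomogZ/dhomog1. Qed.

Lemma dhomog_cast d e p : p \is d.-homog -> d = e -> p \is e.-homog.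
Proof. by move=> ? <-. Qed.

Lemma dhomogD_eq d e p q : p \is d.-homog -> q \is e.-homog -> d = e ->
  p + q \is d.-homog.
Proof. by move=> ? ? de; subst; apply: rpredD. Qed.

Lemma dhomogB_eq d e p q : p \is d.-homog -> q \is e.-homog -> d = e ->
  p - q \is d.-homog.
Proof. by move=> ? ? de; subst; apply: rpredB. Qed.

Lemma dhomog_muln d p j : p \is d.-homog -> p *+ j \is d.-homog.
Proof. exact: rpredMn. Qed.

End Homogeneity.

Ltac dhomog_rec := match goal with
  | |- is_true (in_mem (_ * _) _) => eapply dhomogM; [dhomog_rec | dhomog_rec]
  | |- is_true (in_mem (_ - _) _) => eapply dhomogB_eq; [dhomog_rec | dhomog_rec | lia]
  | |- is_true (in_mem (_ + _) _) => eapply dhomogD_eq; [dhomog_rec | dhomog_rec | lia]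
  | |- is_true (in_mem (_ ^+ _) _) => eapply dhomogMn; dhomog_rec
  | |- is_true (in_mem (_ *+ _) _) => apply: dhomog_muln; dhomog_rec
  | |- is_true (in_mem (_%:MP) _) => apply: dhomog_mpolyC
  | |- _ => first [ eassumption
                  | match goal with H : forall i, is_true (_ \in _) |- _ => apply: H end ]
  end.

Ltac dhomog_solve := eapply dhomog_cast; [dhomog_rec | try lia].

Section FormHomogeneity.
Variables (k : fieldType) (n' : nat) (c : k).
Local Notation m := n'.+3.
Local Notation P := {mpoly k[m]}.
Implicit Types (a b s : P) (x : 'I_m -> P).

Lemma twist_homog d w a b x i :
  a \is d.-homog -> b \is d.-homog -> (forall j, x j \is w.-homog) ->
  twist c%:MP a b x i \is (2 * d + w).-homog.
Proof. by move=> ? ? ?; rewrite /twist /qnorm; case: (val i) => [|[|j]]; dhomog_solve. Qed.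

Lemma cremona_homog w x i : (forall j, x j \is w.-homog) ->
  cremona x i \is (2 * w).-homog.
Proof. by move=> ?; rewrite /cremona; case: (val i) => [|[|[|j]]]; dhomog_solve. Qed.

Lemma cremona_inv_homog w x i : (forall j, x j \is w.-homog) ->
  cremona_inv x i \is (2 * w).-homog.
Proof. by move=> ?; rewrite /cremona_inv; case: (val i) => [|[|[|j]]]; dhomog_solve. Qed.

Lemma qform_homog w x : (forall j, x j \is w.-homog) ->
  qform c%:MP x \is (2 * w).-homog.
Proof. by move=> ?; rewrite /qform /qnorm; dhomog_solve. Qed.

Lemma aform_homog Q w s x : (0 < Q)%N ->
  s \is (2 * w).-homog -> (forall j, x j \is w.-homog) ->
  aform Q s x \is (4 * w * Q ^ n'.+1).-homog.
Proof.
case: Q => // Q _ ? ?; have chain_homog j : frob_chain Q.+1 s x j \is (2 * w * Q.+1 ^ j).-homog.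
  by elim: j => [|j IHj] /=; rewrite /frob_form; dhomog_solve; rewrite expnS; lia.
by rewrite /aform; dhomog_solve.
Qed.

Lemma bform_homog Q J w s x : (0 < Q)%N ->
  s \is (2 * w).-homog -> (forall j, x j \is w.-homog) ->
  bform Q J s x \is (w * (2 * Q + J)).-homog.
Proof. by case: Q => // Q _ ? ?; rewrite /bform; dhomog_solve. Qed.

Lemma conj_red_homog d a b x i :
  a \is d.+1.-homog -> b \is d.-homog -> (forall j, x j \is 1.-homog) ->
  conj_red c%:MP a b x i \is (4 * d + 7).-homog.
Proof.
move=> ? ? ?.
have ? j : cremona_inv x j \is (2 * 1).-homog by apply: cremona_inv_homog.
have ? : x i0 * b \is d.+1.-homog by dhomog_solve.
have ? j : twist c%:MP a (x i0 * b) (cremona_inv x) j \is (2 * d + 4).-homog.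
  by eapply dhomog_cast; [apply: twist_homog; eassumption | lia].
have ? : conj_red1 c%:MP a b x \is (2 * d + 3).-homog by rewrite /conj_red1; dhomog_solve.
have ? : conj_red2 c%:MP a b x \is (2 * d + 3).-homog by rewrite /conj_red2 /qnorm; dhomog_solve.
by rewrite /conj_red; case: (val i) => [|[|[|j]]]; dhomog_solve.
Qed.

End FormHomogeneity.

Section Construction.
Variables (k : finFieldType) (n' : nat) (c : k).
Local Notation m := n'.+3.
Local Notation P := {mpoly k[m]}.
Let Q := #|k|.

Definition X : 'I_m -> P := fun i => 'X_i.

Definition kdeg := (4 * Q ^ n'.+1)%N.

(* [Apol] vanishes at no k-point and [Bpol] at every k-point; [bform] has
   degree [2 Q + J], so this [J] gives both the degree [kdeg]. *)
Definition Apol : P := aform Q (qform c%:MP X) X.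
Definition Bpol : P := bform Q (kdeg - 2 * Q) (qform c%:MP X) X.

Definition twist_map (a b : P) : ratmap k m := [tuple twist c%:MP a b X i | i < m].

Definition kernel_map := twist_map Apol Bpol.
Definition kernel_map_inv := twist_map (Apol + Bpol) (- Bpol).

Lemma card_gt1 : (1 < Q)%N.
Proof. exact: finNzRing_gt1. Qed.

Lemma card_gt0 : (0 < Q)%N.
Proof. exact: ltnW card_gt1. Qed.

Lemma kdeg_gt : (2 * Q < kdeg)%N.
Proof.
rewrite /kdeg expnS mulnA; apply: (@leq_trans (4 * Q)); first by have := card_gt0; lia.
by rewrite leq_pmulr // expn_gt0 card_gt0.
Qed.

Lemma X_homog i : X i \is 1.-homog.
Proof. exact: dhomog_mpolyX. Qed.

Lemma Apol_homog : Apol \is kdeg.-homog.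
Proof.
apply: dhomog_cast (aform_homog card_gt0 (qform_homog c X_homog) X_homog) _.
by rewrite /kdeg muln1.
Qed.

Lemma Bpol_homog : Bpol \is kdeg.-homog.
Proof.
apply: dhomog_cast (bform_homog _ card_gt0 (qform_homog c X_homog) X_homog) _.
by have := kdeg_gt; lia.
Qed.

Lemma twist_map_homog a b : a \is kdeg.-homog -> b \is kdeg.-homog ->
  homog_map (twist_map a b).
Proof.
move=> ? ?; exists (2 * kdeg + 1)%N => i; rewrite tnth_mktuple.
by apply: twist_homog => //; apply: X_homog.
Qed.

Lemma X_comp_mktuple (f : 'I_m -> P) j : X j \mPo [tuple f i | i < m] = f j.
Proof. by rewrite comp_mpolyX_tnth tnth_mktuple. Qed.

Lemma tnth_comp_twist_map a b a' b' i :
  tnth (comp_map (twist_map a b) (twist_map a' b')) i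
  = twist c%:MP (a \mPo twist_map a' b') (b \mPo twist_map a' b') (twist c%:MP a' b' X) i.
Proof.
by rewrite tnth_comp_map tnth_mktuple (twist_morph (X_comp_mktuple _)) /= comp_mpolyC.
Qed.

Lemma qform_comp_twist_map a b :
  qform c%:MP X \mPo twist_map a b = qnorm c%:MP a b ^+ 2 * qform c%:MP X.
Proof.
have XT := X_comp_mktuple (twist c%:MP a b X).
by rewrite (qform_morph XT) /= comp_mpolyC qform_twist.
Qed.

(* The coordinates [x_i], i >= 2, and [qform] are multiplied by [qnorm a b]
   and its square, so [Apol] and [Bpol] pick up the same factor. *)
Lemma Apol_comp_twist_map a b :
  Apol \mPo twist_map a b = qnorm c%:MP a b ^+ kdeg * Apol.
Proof.
have XT := X_comp_mktuple (twist c%:MP a b X).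
rewrite (aform_morph XT) /= qform_comp_twist_map (aform_scale (x := X) _ card_gt0) //.
by move=> l l_ge2; rewrite twist_ge2.
Qed.

Lemma Bpol_comp_twist_map a b :
  Bpol \mPo twist_map a b = qnorm c%:MP a b ^+ kdeg * Bpol.
Proof.
have XT := X_comp_mktuple (twist c%:MP a b X).
rewrite (bform_morph XT) /= qform_comp_twist_map (bform_scale (x := X) _ _ card_gt0) //.
by rewrite subnKC //; exact: ltnW kdeg_gt.
Qed.

Definition Npol : P := qnorm c%:MP Apol Bpol.

Lemma comp_kernel_map_inv i :
  tnth (comp_map kernel_map_inv kernel_map) i = (Npol ^+ kdeg * Npol) ^+ 2 * 'X_i.
Proof.
rewrite tnth_comp_twist_map rmorphD rmorphN /=.
by rewrite Apol_comp_twist_map Bpol_comp_twist_map -mulrDr twist_conj_twist.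
Qed.

Lemma comp_kernel_map i :
  tnth (comp_map kernel_map kernel_map_inv) i = (Npol ^+ kdeg * Npol) ^+ 2 * 'X_i.
Proof.
by rewrite tnth_comp_twist_map Apol_comp_twist_map Bpol_comp_twist_map qnorm_conj twist_twist_conj.
Qed.

Lemma meval_twist_map a b v i :
  eval_map (twist_map a b) v i = twist c a.@[v] b.@[v] v i.
Proof.
have Xv j : (X j).@[v] = v j by rewrite mevalXU.
by rewrite /eval_map tnth_mktuple (twist_morph Xv) /= mevalC.
Qed.

Lemma meval_Bpol v : Bpol.@[v] = 0.
Proof.
have Xv j : (X j).@[v] = v j by rewrite mevalXU.
by rewrite (bform_morph Xv) bform_eq0 // subn_gt0 kdeg_gt.
Qed.

Hypothesis c_aniso : forall u : k, u ^+ 2 - u != c.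

Lemma meval_Apol_neq0 v : kpoint v -> Apol.@[v] != 0.
Proof.
have Xv j : (X j).@[v] = v j by rewrite mevalXU.
move=> [i vi_neq0]; rewrite (aform_morph Xv) (qform_morph Xv) /= mevalC.
apply/eqP => /aform_eq0 [/(qform_eq0 c_aniso) [v0 v1] v_hi]; case/eqP: vi_neq0.
case: i => [[|[|j]] lt_j]; last by rewrite v_hi.
  by rewrite -v0; congr v; apply: val_inj.
by rewrite -v1; congr v; apply: val_inj.
Qed.

Lemma kernel_map_scales : scales_kpoints kernel_map.
Proof.
move=> v kv; exists (Apol.@[v] ^+ 2); first by rewrite expf_neq0 // meval_Apol_neq0.
by move=> i; rewrite meval_twist_map meval_Bpol twist_b0.
Qed.

Lemma kernel_map_inv_scales : scales_kpoints kernel_map_inv.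
Proof.
move=> v kv; exists (Apol.@[v] ^+ 2); first by rewrite expf_neq0 // meval_Apol_neq0.
by move=> i; rewrite meval_twist_map mevalD mevalN meval_Bpol oppr0 addr0 twist_b0.
Qed.

Lemma Npol_neq0 : Npol != 0.
Proof.
have k1 : kpoint (fun _ : 'I_m => 1 : k) by exists i0; rewrite oner_eq0.
apply: (@meval_neq0 _ _ _ (fun _ => 1)); rewrite /Npol (@qnorm_morph _ _ (meval _)) /=.
by rewrite mevalC meval_Bpol /qnorm mulr0 addr0 expr0n mulr0 subr0 expf_neq0 // meval_Apol_neq0.
Qed.

Lemma kernel_map_inverse : is_inverse kernel_map kernel_map_inv.
Proof.
have N_neq0 : (Npol ^+ kdeg * Npol) ^+ 2 != 0 by rewrite !(expf_neq0, mulf_neq0) // Npol_neq0.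
split; first by apply: twist_map_homog;
  [exact: rpredD Apol_homog Bpol_homog | rewrite rpredN Bpol_homog].
- exact: equiv_map_id N_neq0 comp_kernel_map_inv.
- exact: equiv_map_id N_neq0 comp_kernel_map.
Qed.

Lemma kernel_map_in_kernel : in_BCr_kernel kernel_map.
Proof.
apply: in_BCr_kernel_scale kernel_map_inverse kernel_map_scales kernel_map_inv_scales.
exact: twist_map_homog Apol_homog Bpol_homog.
Qed.


Definition cremona_map : ratmap k m := [tuple cremona X i | i < m].
Definition cremona_map_inv : ratmap k m := [tuple cremona_inv X i | i < m].

Lemma cremona_map_inverse : is_inverse cremona_map cremona_map_inv.
Proof.
split.
- by exists 2%N => i; rewrite tnth_mktuple; apply: (cremona_inv_homog (w := 1)) X_homog.
- apply: (@equiv_map_id _ _ _ (X i0 * X i1 * (X i2 - X i0))) => // [|j].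
    apply: (@meval_neq0 _ _ _ (fun i => (i != i2)%:R)).
    by rewrite !mevalM mevalB !mevalXU /= sub0r !mul1r oppr_eq0 oner_eq0.
  by rewrite tnth_comp_map tnth_mktuple (cremona_inv_morph (X_comp_mktuple _)) cremona_invK.
- apply: (@equiv_map_id _ _ _ (X i0 * X i1 * X i2)) => // [|j].
    apply: (@meval_neq0 _ _ _ (fun _ => 1)).
    by rewrite !mevalM !mevalXU !mul1r oner_eq0.
  by rewrite tnth_comp_map tnth_mktuple (cremona_morph (X_comp_mktuple _)) cremonaK.
Qed.

Lemma cremona_map_birational : birational cremona_map.
Proof.
split; last by exists cremona_map_inv; apply: cremona_map_inverse.
by exists 2%N => i; rewrite tnth_mktuple; apply: (cremona_homog (w := 1)) X_homog.
Qed.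

Definition conj_map := comp_map cremona_map (comp_map kernel_map cremona_map_inv).

Definition Acr : P := Apol \mPo cremona_map_inv.

(* [Bpol \mPo cremona_map_inv] is divisible by [X i0]: write [bform] with
   [s ^+ Q.-1 - (t ^+ 2) ^+ Q.-1 = (s - t ^+ 2) * ...] and use
   [qform_cremona_inv]. *)
Definition bcr : P :=
  let s := qform c%:MP (cremona_inv X) in let t := cremona_inv X i2 in
  s * t ^+ (kdeg - 2 * Q) * cremona_defect c%:MP X
    * \sum_(i < Q.-1) s ^+ (Q.-1.-1 - i) * (t ^+ 2) ^+ i.

Definition conj_red_map : ratmap k m := [tuple conj_red c%:MP Acr bcr X i | i < m].

Lemma Bpol_comp_cremona_inv : Bpol \mPo cremona_map_inv = X i0 * bcr.
Proof.
have XT := X_comp_mktuple (cremona_inv X).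
rewrite (bform_morph XT) (qform_morph XT) /= comp_mpolyC /bform subrXX.
by rewrite qform_cremona_inv /bcr; ring.
Qed.

Lemma tnth_conj_map i : tnth conj_map i = X i0 * tnth conj_red_map i.
Proof.
have XT j : X j \mPo comp_map kernel_map cremona_map_inv
    = twist c%:MP Acr (X i0 * bcr) (cremona_inv X) j.
  rewrite comp_mpolyX_tnth tnth_comp_map tnth_mktuple.
  by rewrite (twist_morph (X_comp_mktuple _)) /= comp_mpolyC -Bpol_comp_cremona_inv.
by rewrite tnth_comp_map tnth_mktuple (cremona_morph XT) cremona_twist_cremona_inv tnth_mktuple.
Qed.

Lemma conj_red_map_homog : homog_map conj_red_map.
Proof.
have Acr_homog : Acr \is (2 * kdeg).-1.+1.-homog.
  have XT := X_comp_mktuple (cremona_inv X).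
  rewrite /Acr (aform_morph XT) (qform_morph XT) /= comp_mpolyC.
  apply: dhomog_cast (aform_homog card_gt0 (qform_homog c _) _) _.
  - by move=> j; apply: (cremona_inv_homog (w := 1)) X_homog.
  - by move=> j; apply: (cremona_inv_homog (w := 1)) X_homog.
  by have := kdeg_gt; rewrite /kdeg; lia.
have bcr_homog : bcr \is (2 * kdeg).-1.-homog.
  have ? := X_homog.
  have ? j : cremona_inv X j \is (2 * 1).-homog by apply: cremona_inv_homog.
  have ? : qform c%:MP (cremona_inv X) \is (2 * (2 * 1)).-homog by apply: qform_homog.
  have ? : cremona_defect c%:MP X \is 3.-homog by rewrite /cremona_defect; dhomog_solve.
  have ? : \sum_(i < Q.-1) qform c%:MP (cremona_inv X) ^+ (Q.-1.-1 - i)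
        * (cremona_inv X i2 ^+ 2) ^+ i \is (4 * Q.-1.-1).-homog.
    by apply: rpred_sum => i _; move: (ltn_ord i) => ?; dhomog_solve.
  by move: kdeg_gt card_gt1 => ? ?; rewrite /bcr; cbv zeta; dhomog_solve.
exists (4 * (2 * kdeg).-1 + 7)%N => i; rewrite tnth_mktuple.
by apply: conj_red_homog => //; apply: X_homog.
Qed.

Definition e12 : 'I_m -> k := fun i => ((i == i1) || (i == i2))%:R.

Lemma meval_cremona_inv_e12 j : (cremona_inv X j).@[e12] = cremona_inv e12 j.
Proof. by apply: cremona_inv_morph => l; apply: mevalXU. Qed.

Lemma qform_cremona_inv_e12 : qform c (cremona_inv e12) = 1.
Proof. by rewrite /qform /qnorm /cremona_inv /e12 /=; ring. Qed.

Lemma meval_Acr_neq0 : Acr.@[e12] != 0.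
Proof.
have XT := X_comp_mktuple (cremona_inv X).
rewrite /Acr (aform_morph XT) (qform_morph XT) /= comp_mpolyC.
rewrite (aform_morph meval_cremona_inv_e12) (qform_morph meval_cremona_inv_e12) /= mevalC.
by rewrite qform_cremona_inv_e12; apply/eqP => /aform_eq0 [/eqP]; rewrite oner_eq0.
Qed.

Lemma meval_bcr : bcr.@[e12] = 1.
Proof.
have s1 : (qform c%:MP (cremona_inv X)).@[e12] = 1.
  by rewrite (qform_morph meval_cremona_inv_e12) /= mevalC qform_cremona_inv_e12.
have t1 : (cremona_inv X i2).@[e12] = 1.
  by rewrite meval_cremona_inv_e12 /cremona_inv /e12 /=; ring.
have d1 : (cremona_defect c%:MP X).@[e12] = -1.
  by rewrite /cremona_defect !(mevalB, mevalM, mevalMn, rmorphXn) /= mevalC !mevalXU /e12 /=; ring.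
have sum1 : (\sum_(i < Q.-1) qform c%:MP (cremona_inv X) ^+ (Q.-1.-1 - i)
        * (cremona_inv X i2 ^+ 2) ^+ i).@[e12] = -1.
  rewrite rmorph_sum /= (eq_bigr (fun _ => 1)) => [|i _]; last first.
    by rewrite mevalM !rmorphXn /= s1 t1 !expr1n mulr1.
  rewrite sumr_const card_ord; apply/eqP.
  by rewrite -subr_eq0 opprK -mulrSr prednK ?card_gt0 // natr_card.
by rewrite /bcr !mevalM rmorphXn /= s1 t1 d1 sum1 expr1n; ring.
Qed.

Lemma conj_map_not_in_kernel : ~ in_BCr_kernel conj_map.
Proof.
set a := Acr.@[e12]; have a_neq0 : a != 0 := meval_Acr_neq0.
have Gv j : eval_map conj_red_map e12 j = conj_red c a 1 e12 j.
  have Xv l : (X l).@[e12] = e12 l by rewrite mevalXU.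
  by rewrite /eval_map tnth_mktuple (conj_red_morph Xv) /= mevalC meval_bcr.
have moved : eval_map conj_red_map e12 i1 - eval_map conj_red_map e12 i2 != 0.
  by rewrite !Gv conj_red_at_e12 // oppr_eq0 expf_neq0.
have [i Gvi_neq0] : kpoint (eval_map conj_red_map e12).
  have [G1_0|] := eqVneq (eval_map conj_red_map e12 i1) 0; last by exists i1.
  by exists i2; move: moved; rewrite G1_0 sub0r oppr_eq0.
apply: (@not_in_BCr_kernel _ _ _ conj_red_map e12 i1 i2).
- by exists i1; rewrite /e12 eqxx oner_eq0.
- exact: conj_red_map_homog.
- apply: (@equiv_map_scale _ _ _ _ (X i0)); last exact: tnth_conj_map.
    exact: mpolyX_neq0.
  by exists i; apply: meval_neq0 Gvi_neq0.
- by exists i.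
- by rewrite /e12 /= !mulr1 -subr_eq0.
Qed.

End Construction.

Theorem proposition4p18 (k : finFieldType) (n : nat) (hn : (2 <= n)%N) :
  exists (f g gi : ratmap k n.+1),
    [/\ in_BCr_kernel f, birational g, is_inverse g gi &
        ~ in_BCr_kernel (comp_map g (comp_map f gi))].
Proof.
case: n hn => [|[|n']] // _.
have [c c_aniso] := exists_anisotropic k.
exists (kernel_map n' c), (cremona_map k n'), (cremona_map_inv k n'); split.
- exact: kernel_map_in_kernel.
- exact: cremona_map_birational.
- exact: cremona_map_inverse.
- exact: conj_map_not_in_kernel.
Qed.
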